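(* Let $\mathsf A_1,\dots,\mathsf A_n$ be incompatible observables on a finite-dimensional Hilbert space with $m_1,\dots,m_n$ outcomes respectively. Then $$\chi_{incomp}(\mathsf A_1,\dots,\mathsf A_n)\le\sum_{j=1}^nm_j-n+1.$$
   Context: Observables are POVMs with finitely many outcomes on a $d$-dimensional Hilbert space; $\mathcal S$ is its set of density operators. Observables are compatible if there is a joint observable $\mathsf G$ on the product outcome set whose marginals $\sum_{x_l,l\neq j}\mathsf G(x_1,\dots,x_n)$ equal $\mathsf A_j(x_j)$; otherwise incompatible. For $\mathcal S_0\subset\mathcal S$ they are $\mathcal S_0$-compatible if there are compatible observables $\mathsf A'_j$ (same outcome sets) with $\mathrm{Tr}[\varrho\mathsf A'_j(x)]=\mathrm{Tr}[\varrho\mathsf A_j(x)]$ for all $j,x$ and $\varrho\in\mathcal S_0$; otherwise $\mathcal S_0$-incompatible. $\chi_{incomp}(\mathsf A_1,\dots,\mathsf A_n)=\min\{\dim\mathrm{aff}\mathcal S_0+1:\mathcal S_0\subset\mathcal S,\ \mathsf A_1,\dots,\mathsf A_n\ \mathcal S_0\text{-incompatible}\}$. *)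

From HB Require Import structures.
From mathcomp Require Import all_boot all_order all_algebra.
From mathcomp Require Import Rstruct complex.
From Stdlib Require Import Reals.

Set Implicit Arguments.
Unset Strict Implicit.
Unset Printing Implicit Defensive.

Import Order.TTheory GRing.Theory Num.Theory.
Local Open Scope ring_scope.

Definition C : numClosedFieldType := Rdefinitions.R[i].

Definition adj_mx (m n : nat) (A : 'M[C]_(m, n)) : 'M[C]_(n, m) :=
  (map_mx (fun z : C => z^*) A)^T.

Definition psd (d : nat) (A : 'M[C]_d) : Prop :=
  adj_mx A = A /\ forall v : 'cV[C]_d, 0 <= (adj_mx v *m A *m v) 0 0.

Definition density (d : nat) (rho : 'M[C]_d) : Prop :=
  psd rho /\ \tr rho = 1.

Definition observable (d m : nat) (A : 'I_m -> 'M[C]_d) : Prop :=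
  (forall x, psd (A x)) /\ \sum_(x < m) A x = 1%:M.

Definition outcomes (n : nat) (m : 'I_n -> nat) :=
  {dffun forall j : 'I_n, 'I_(m j)}.

Definition compatible (d n : nat) (m : 'I_n -> nat)
    (A : forall j : 'I_n, 'I_(m j) -> 'M[C]_d) : Prop :=
  exists G : outcomes m -> 'M[C]_d,
    (forall x, psd (G x)) /\ \sum_(x : outcomes m) G x = 1%:M /\
    forall (j : 'I_n) (k : 'I_(m j)),
      \sum_(x : outcomes m | x j == k) G x = A j k.

Definition S0_compatible (d n : nat) (m : 'I_n -> nat)
    (S0 : 'M[C]_d -> Prop) (A : forall j : 'I_n, 'I_(m j) -> 'M[C]_d) : Prop :=
  exists A' : forall j : 'I_n, 'I_(m j) -> 'M[C]_d,
    (forall j, observable (A' j)) /\ compatible A' /\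
    forall (j : 'I_n) (x : 'I_(m j)) (rho : 'M[C]_d), S0 rho ->
      \tr (rho *m A' j x) = \tr (rho *m A j x).

(* [span_dim V k]: the linear span of the set V of vectors (a subspace of
   'rV_N, represented as a square matrix up to row-space equality) has
   dimension k; U is the smallest subspace containing V. *)
Definition span_dim (N : nat) (V : 'rV[C]_N -> Prop) (k : nat) : Prop :=
  exists U : 'M[C]_N,
    \rank U = k /\ (forall v, V v -> (v <= U)%MS) /\
    forall U' : 'M[C]_N, (forall v, V v -> (v <= U')%MS) -> (U <= U')%MS.

(* dimension of the affine hull of a nonempty set S0 of operators:
   the dimension of the span of {rho - rho0 : rho in S0}, rho0 in S0. *)
Definition affdim (d : nat) (S0 : 'M[C]_d -> Prop) (k : nat) : Prop :=
  exists rho0, S0 rho0 /\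
    span_dim (fun v : 'rV[C]_(d * d) =>
                exists rho, S0 rho /\ v = mxvec (rho - rho0)) k.

(* c is an admissible value in the set whose minimum is chi_incomp *)
Definition chi_candidate (d n : nat) (m : 'I_n -> nat)
    (A : forall j : 'I_n, 'I_(m j) -> 'M[C]_d) (c : nat) : Prop :=
  exists (S0 : 'M[C]_d -> Prop) (k : nat),
    (forall rho, S0 rho -> density rho) /\ ~ S0_compatible S0 A /\
    affdim S0 k /\ c = k.+1.

Definition is_chi_incomp (d n : nat) (m : 'I_n -> nat)
    (A : forall j : 'I_n, 'I_(m j) -> 'M[C]_d) (c : nat) : Prop :=
  chi_candidate A c /\ forall c', chi_candidate A c' -> leq c c'.

(* The joint observables form a compact convex set, so some joint observable G0 has
   marginals B nearest to A in the Hilbert-Schmidt norm.  Incompatibility makes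
   F := A - B nonzero, and the variational inequality at G0 gives
   Re sum_jk tr(F_jk (A_jk - A'_jk)) > 0 for every compatible A'.
   Fix an outcome k0_j of each A_j.  Since all effects lie between 0 and 1, the operators
   Y_jk := 3 + F_jk - F_jk0 are positive definite; let S0 consist of 1/d and the states
   Y_jk / tr Y_jk for k <> k0_j.  These are sum_j (m_j - 1) + 1 states, so the affine hull
   of S0 has dimension at most sum_j (m_j - 1).  If a compatible A' agrees with A on S0,
   then, F_jk - F_jk0 being in the span of S0, tr(F_jk (A_jk - A'_jk)) =
   tr(F_jk0 (A_jk - A'_jk)); summing over k gives tr(F_jk0 (1 - 1)) = 0, contradicting
   the separation. *)

From mathcomp Require Import all_boot all_order all_algebra.
From mathcomp Require Import Rstruct complex ring lra.
From mathcomp Require Import boolp classical_sets reals topology normedtype.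
From mathcomp Require Import derive matrix_normedtype zify.

Set Implicit Arguments.
Unset Strict Implicit.
Unset Printing Implicit Defensive.
Import Order.TTheory GRing.Theory Num.Theory.
Import numFieldNormedType.Exports.
Local Open Scope ring_scope.

(** * Complex numbers as pairs of reals *)

Definition RR : realType := Rdefinitions.R.
Definition re (z : C) : RR := complex.Re z.
Definition im (z : C) : RR := complex.Im z.

Lemma eqC_reim (x y : C) : x = y <-> re x = re y /\ im x = im y.
Proof. by case: x; case: y => a b c e; split=> [[-> ->]|[/= -> ->]]. Qed.

Lemma ge0C (z : C) : (0 <= z) = (im z == 0) && (0 <= re z).
Proof. by rewrite lecE. Qed.

Lemma reD (x y : C) : re (x + y) = re x + re y. Proof. by case: x; case: y. Qed.
Lemma imD (x y : C) : im (x + y) = im x + im y. Proof. by case: x; case: y. Qed.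
Lemma reN (x : C) : re (- x) = - re x. Proof. by case: x. Qed.
Lemma imN (x : C) : im (- x) = - im x. Proof. by case: x. Qed.
Lemma reM (x y : C) : re (x * y) = re x * re y - im x * im y.
Proof. by case: x; case: y. Qed.
Lemma imM (x y : C) : im (x * y) = re x * im y + im x * re y.
Proof. by case: x => a b; case: y => c e; rewrite /im /=; lra. Qed.
Lemma re_conj (x : C) : re x^* = re x. Proof. by case: x. Qed.
Lemma im_conj (x : C) : im x^* = - im x. Proof. by case: x. Qed.
Lemma re_realM (r : RR) (z : C) : re (Complex r 0 * z) = r * re z.
Proof. by case: z => a b; rewrite reM /re /im /=; lra. Qed.
Lemma im_realM (r : RR) (z : C) : im (Complex r 0 * z) = r * im z.
Proof. by case: z => a b; rewrite imM /re /im /=; lra. Qed.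
Lemma conj_real (r : RR) : (Complex r 0 : C)^* = Complex r 0.
Proof. by apply/eqC_reim; rewrite re_conj im_conj /im /= oppr0. Qed.
Lemma ge0_real (r : RR) : (0 <= Complex r 0 :> C) = (0 <= r).
Proof. by rewrite ge0C /= eqxx. Qed.

Lemma re_sum (I : Type) (r : seq I) (P : pred I) (F : I -> C) :
  re (\sum_(i <- r | P i) F i) = \sum_(i <- r | P i) re (F i).
Proof. by elim/big_rec2: _ => // i a b _ <-; rewrite reD. Qed.

(** * Positive semidefinite matrices *)

Section Adjoint.
Variables p q : nat.
Implicit Types A B : 'M[C]_(p, q).

Lemma adj_mxD A B : adj_mx (A + B) = adj_mx A + adj_mx B.
Proof. by apply/matrixP => i j; rewrite !mxE rmorphD. Qed.
Lemma adj_mxN A : adj_mx (- A) = - adj_mx A.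
Proof. by apply/matrixP => i j; rewrite !mxE rmorphN. Qed.
Lemma adj_mxB A B : adj_mx (A - B) = adj_mx A - adj_mx B.
Proof. by rewrite adj_mxD adj_mxN. Qed.
Lemma adj_mxZ c A : adj_mx (c *: A) = c^* *: adj_mx A.
Proof. by apply/matrixP => i j; rewrite !mxE rmorphM. Qed.
Lemma adj_mx0 : adj_mx (0 : 'M[C]_(p, q)) = 0.
Proof. by apply/matrixP => i j; rewrite !mxE rmorph0. Qed.
Lemma adj_delta a b : adj_mx (delta_mx a b : 'M[C]_(p, q)) = delta_mx b a.
Proof. by apply/matrixP => i j; rewrite !mxE rmorph_nat andbC. Qed.

End Adjoint.

Lemma adj_mx1 d : adj_mx (1%:M : 'M[C]_d) = 1%:M.
Proof. by apply/matrixP => i j; rewrite !mxE rmorph_nat eq_sym. Qed.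

Definition mxform (d : nat) (v w : 'cV[C]_d) (M : 'M[C]_d) : C :=
  (adj_mx v *m M *m w) 0 0.

Section Form.
Variable d : nat.
Implicit Types (v w : 'cV[C]_d) (M : 'M[C]_d).

Lemma mxform_delta a b M : mxform (delta_mx a 0) (delta_mx b 0) M = M a b.
Proof. by rewrite /mxform adj_delta -rowE -colE !mxE. Qed.
Lemma mxformDl v v' w M : mxform (v + v') w M = mxform v w M + mxform v' w M.
Proof. by rewrite /mxform adj_mxD !mulmxDl mxE. Qed.
Lemma mxformDr v w w' M : mxform v (w + w') M = mxform v w M + mxform v w' M.
Proof. by rewrite /mxform mulmxDr mxE. Qed.
Lemma mxformZl c v w M : mxform (c *: v) w M = c^* * mxform v w M.
Proof. by rewrite /mxform adj_mxZ -!scalemxAl mxE. Qed.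
Lemma mxformZr c v w M : mxform v (c *: w) M = c * mxform v w M.
Proof. by rewrite /mxform -scalemxAr mxE. Qed.
Lemma mxformD v w M N : mxform v w (M + N) = mxform v w M + mxform v w N.
Proof. by rewrite /mxform mulmxDr mulmxDl mxE. Qed.
Lemma mxformZ c v w M : mxform v w (c *: M) = c * mxform v w M.
Proof. by rewrite /mxform -scalemxAr -scalemxAl mxE. Qed.
Lemma mxform0 v w : mxform v w 0 = 0.
Proof. by rewrite /mxform mulmx0 mul0mx mxE. Qed.
Lemma mxform1_ge0 v : 0 <= mxform v v 1%:M.
Proof.
rewrite /mxform mulmx1 mxE; apply: sumr_ge0 => i _.
by rewrite !mxE mulrC mul_conjC_ge0.
Qed.

Lemma mxform_pair a b u M :
  mxform (delta_mx a 0 + u *: delta_mx b 0) (delta_mx a 0 + u *: delta_mx b 0) M =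
  M a a + u * M a b + u^* * M b a + u^* * u * M b b.
Proof. by rewrite !mxformDl !mxformDr !mxformZl !mxformZr !mxform_delta mulrA; ring. Qed.

End Form.

Section Psd.
Variable d : nat.
Implicit Types M N : 'M[C]_d.

Lemma psdP M :
  psd M <-> (forall a b, M b a = (M a b)^*) /\ (forall w, 0 <= mxform w w M).
Proof.
split=> [[hM hge] | [hM hge]]; split=> //.
  by move=> a b; rewrite -[in LHS]hM !mxE.
by apply/matrixP => a b; rewrite !mxE hM conjCK.
Qed.

Lemma psd_form_ge0 M w : psd M -> 0 <= mxform w w M.
Proof. by case=> _; apply. Qed.

Lemma psd0 : psd (0 : 'M[C]_d).
Proof. by split=> [|w]; rewrite ?adj_mx0 // -/(mxform _ _ _) mxform0. Qed.

Lemma psd1 : psd (1%:M : 'M[C]_d).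
Proof. by split=> [|w]; [exact: adj_mx1 | exact: mxform1_ge0]. Qed.

Lemma psdD M N : psd M -> psd N -> psd (M + N).
Proof.
move=> [hM geM] [hN geN]; split=> [|w]; first by rewrite adj_mxD hM hN.
by rewrite -/(mxform _ _ _) mxformD; exact: addr_ge0 (geM w) (geN w).
Qed.

Lemma psd_sum (I : Type) (r : seq I) (P : pred I) (F : I -> 'M[C]_d) :
  (forall i, P i -> psd (F i)) -> psd (\sum_(i <- r | P i) F i).
Proof. by move=> hF; elim/big_rec: _ => [|i M Pi]; [exact: psd0 | apply/psdD/hF]. Qed.

Lemma psdZ c M : 0 <= c -> psd M -> psd (c *: M).
Proof.
move=> c_ge0 [hM geM]; split=> [|w].
  by rewrite adj_mxZ hM conj_Creal // ger0_real.
by rewrite -/(mxform _ _ _) mxformZ; exact: mulr_ge0 (geM w).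
Qed.

Lemma mxtrace_psd_ge0 M : psd M -> 0 <= \tr M.
Proof.
by move=> hM; apply: sumr_ge0 => a _; rewrite -mxform_delta psd_form_ge0.
Qed.

Lemma psd_entry_bound M : psd M -> psd (1%:M - M) ->
  forall a b, -1 <= re (M a b) <= 1 /\ -1 <= im (M a b) <= 1.
Proof.
move=> hM hN.
(* Off-diagonal entries are bounded by testing the form on [e_a + u e_b], [u = +-1, +-i]. *)
have diag a : im (M a a) = 0 /\ 0 <= re (M a a) <= 1.
  have := psd_form_ge0 (delta_mx a 0) hM; rewrite mxform_delta ge0C => /andP[/eqP -> ->].
  have := psd_form_ge0 (delta_mx a 0) hN; rewrite mxform_delta ge0C !mxE eqxx.
  by case/andP=> _; rewrite reD reN /re /=; split=> //; lra.
have herm a b : M b a = (M a b)^* by exact: ((psdP M).1 hM).1.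
move=> a b; have [<- | ab] := eqVneq a b.
  by have [-> h] := diag a; split; apply/andP; split; lra.
have key u : 0 <= re (M a a) + re (u * M a b) + re (u^* * (M a b)^*) + re (u^* * u * M b b).
  have := psd_form_ge0 (delta_mx a 0 + u *: delta_mx b 0) hM.
  by rewrite mxform_pair (herm a b) ge0C !reD => /andP[].
have [ia ha] := diag a; have [ib hb] := diag b.
move: (key (Complex 1 0)) (key (Complex (-1) 0)) (key (Complex 0 1)) (key (Complex 0 (-1))).
rewrite !reM !imM !re_conj !im_conj ib /re /im /= => k1 k2 k3 k4.
by split; apply/andP; split; lra.
Qed.

End Psd.

(** * The real Hilbert-Schmidt inner product *)

Definition redot (p q : nat) (X Y : 'M[C]_(p, q)) : RR :=
  \sum_a \sum_b (re (X a b) * re (Y a b) + im (X a b) * im (Y a b)).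

Section Redot.
Variables p q : nat.
Implicit Types X Y Z : 'M[C]_(p, q).

Lemma redotC X Y : redot X Y = redot Y X.
Proof. by apply: eq_bigr => a _; apply: eq_bigr => b _; rewrite mulrC [im _ * _]mulrC. Qed.

Lemma redotDr X Y Z : redot X (Y + Z) = redot X Y + redot X Z.
Proof.
rewrite /redot -big_split; apply: eq_bigr => a _; rewrite -big_split.
by apply: eq_bigr => b _; rewrite mxE reD imD /=; ring.
Qed.

Lemma redotNr X Y : redot X (- Y) = - redot X Y.
Proof.
rewrite /redot -sumrN; apply: eq_bigr => a _; rewrite -sumrN.
by apply: eq_bigr => b _; rewrite mxE reN imN; ring.
Qed.

Lemma redotBr X Y Z : redot X (Y - Z) = redot X Y - redot X Z.
Proof. by rewrite redotDr redotNr. Qed.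

Lemma redotBl X Y Z : redot (Y - Z) X = redot Y X - redot Z X.
Proof. by rewrite !(redotC _ X) redotBr. Qed.

Lemma redotZr (t : RR) X Y : redot X (Complex t 0 *: Y) = t * redot X Y.
Proof.
rewrite /redot mulr_sumr; apply: eq_bigr => a _; rewrite mulr_sumr.
by apply: eq_bigr => b _; rewrite mxE re_realM im_realM; ring.
Qed.

Lemma redotZl (t : RR) X Y : redot (Complex t 0 *: X) Y = t * redot X Y.
Proof. by rewrite !(redotC _ Y) redotZr. Qed.

Lemma redot_ge0 X : 0 <= redot X X.
Proof. by apply: sumr_ge0 => a _; apply: sumr_ge0 => b _; nra. Qed.

Lemma redot_eq0 X : redot X X = 0 -> X = 0.
Proof.
have term_ge0 a b : 0 <= re (X a b) * re (X a b) + im (X a b) * im (X a b) by nra.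
have row_ge0 a : 0 <= \sum_b (re (X a b) * re (X a b) + im (X a b) * im (X a b)).
  by apply: sumr_ge0 => b _.
move=> /(psumr_eq0P (fun a _ => row_ge0 a)) X0; apply/matrixP => a b; rewrite mxE.
have /(_ b isT) := psumr_eq0P (fun b _ => term_ge0 a b) (X0 a isT).
by move=> ?; apply/eqC_reim; split; rewrite /re /im /=; nra.
Qed.

Lemma redot_trace X Y : redot X Y = re (\tr (adj_mx X *m Y)).
Proof.
rewrite /redot /mxtrace re_sum exchange_big; apply: eq_bigr => b _.
rewrite mxE re_sum; apply: eq_bigr => a _.
by rewrite !mxE reM re_conj im_conj; ring.
Qed.

Lemma redot_expand X Y (t : RR) :
  redot (X - Complex t 0 *: Y) (X - Complex t 0 *: Y) =
  redot X X - 2 * t * redot X Y + t ^+ 2 * redot Y Y.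
Proof. by rewrite redotBl !redotBr !redotZl !redotZr (redotC Y X); ring. Qed.

End Redot.

(** * Compactness of the set of POVMs *)

Definition povm (T : finType) (d : nat) (G : T -> 'M[C]_d) : Prop :=
  (forall x, psd (G x)) /\ \sum_x G x = 1%:M.

Section Povm.
Variables (T : finType) (d : nat).
Implicit Types G : T -> 'M[C]_d.

Lemma povm_point (x0 : T) : povm (fun x => if x == x0 then 1%:M else 0 : 'M[C]_d).
Proof.
split=> [x | ]; first by case: eqP => _; [exact: psd1 | exact: psd0].
by rewrite (bigD1 x0) //= eqxx big1 ?addr0 // => x /negbTE ->.
Qed.

Lemma povm_compl_psd G x : povm G -> psd (1%:M - G x).
Proof.
case=> hG <-; rewrite (bigD1 x) //= addrC addrK.
by apply: psd_sum => y _; exact: hG.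
Qed.

Lemma povm_entry_bound G x a b : povm G ->
  -1 <= re (G x a b) <= 1 /\ -1 <= im (G x a b) <= 1.
Proof. by move=> hG; apply: psd_entry_bound; [exact: hG.1 | exact: povm_compl_psd]. Qed.

Lemma povm_segment G0 G (t : RR) : povm G0 -> povm G -> 0 <= t -> t <= 1 ->
  povm (fun x => G0 x + Complex t 0 *: (G x - G0 x)).
Proof.
move=> [psdG0 sumG0] [psdG sumG] t_ge0 t_le1; split=> [x | ].
  have -> : G0 x + Complex t 0 *: (G x - G0 x) =
            Complex (1 - t) 0 *: G0 x + Complex t 0 *: G x.
    apply/matrixP => a b; rewrite !mxE; apply/eqC_reim.
    by rewrite !reD !imD !re_realM !im_realM !reD !imD !reN !imN; split; ring.
  by apply: psdD; apply: psdZ; rewrite ?ge0_real ?subr_ge0.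
by rewrite big_split /= -scaler_sumr sumrB sumG sumG0 subrr scaler0 addr0.
Qed.

End Povm.

Local Open Scope classical_set_scope.

Section Continuity.
Variable N : nat.
Implicit Types f g : 'rV[RR]_N -> RR.

Lemma continuous_add f g :
  continuous f -> continuous g -> continuous (fun v => f v + g v).
Proof. by move=> hf hg v; exact: continuousD (hf v) (hg v). Qed.

Lemma continuous_mul f g :
  continuous f -> continuous g -> continuous (fun v => f v * g v).
Proof. by move=> hf hg v; exact: continuousM (hf v) (hg v). Qed.

Lemma continuous_sum (I : Type) (r : seq I) (P : pred I) (g : I -> 'rV[RR]_N -> RR) :
  (forall i, continuous (g i)) -> continuous (fun v => \sum_(i <- r | P i) g i v).
Proof.
move=> hg; elim: r => [|i r IH].
  by under eq_fun do rewrite big_nil; exact: cst_continuous.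
under eq_fun do rewrite big_cons.
by case: (P i) => //; exact: continuous_add.
Qed.

Lemma linear_continuous f :
  (forall u v, f (u + v) = f u + f v) -> (forall r v, f (r *: v) = r * f v) ->
  continuous f.
Proof.
move=> fD fZ.
have -> : f = fun v => \sum_(k < N) v 0 k * f (delta_mx 0 k).
  apply: funext => v; rewrite {1}(row_sum_delta v).
  elim/big_rec2: _ => [|k x y _ <-]; last by rewrite fD fZ.
  by rewrite -(scale0r 0) fZ mul0r.
apply: continuous_sum => k; apply: continuous_mul; last exact: cst_continuous.
exact: coord_continuous.
Qed.

Lemma closed_level f c : continuous f -> closed [set v | f v = c].
Proof. by move=> hf; exact: (preimage_closed (fun v _ => hf v) (@closed_eq _ c)). Qed.

Lemma closed_ge0 f : continuous f -> closed [set v | 0 <= f v].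
Proof. by move=> hf; exact: (preimage_closed (fun v _ => hf v) (@closed_ge _ 0)). Qed.

End Continuity.

Lemma closed_forall (X : topologicalType) (I : Type) (S : I -> set X) :
  (forall i, closed (S i)) -> closed [set v | forall i, S i v].
Proof.
move=> hS; rewrite (_ : [set v | _] = \bigcap_(i in setT) S i).
  by apply: closed_bigI => i _; exact: hS.
by apply/seteqP; split=> v /= hv i //; exact: hv.
Qed.

Section Encoding.
Variables (T : finType) (d : nat).

(* A family [G : T -> 'M[C]_d] is identified with the real vector of the real and
   imaginary parts of its entries, so that compactness in ['rV[RR]_N] and the extreme
   value theorem apply. *)
Definition coord_index := (T * 'I_d * 'I_d * bool)%type.
Local Notation N := #|{: coord_index}|.

Definition decode (v : 'rV[RR]_N) (x : T) : 'M[C]_d :=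
  \matrix_(a, b) Complex (v 0 (enum_rank ((x, a, b, false) : coord_index)))
                         (v 0 (enum_rank ((x, a, b, true) : coord_index))).

Definition encode (G : T -> 'M[C]_d) : 'rV[RR]_N :=
  \row_k let: (x, a, b, s) := enum_val k in if s then im (G x a b) else re (G x a b).

Lemma encodeK G : decode (encode G) = G.
Proof.
by apply: funext => x; apply/matrixP => a b; rewrite !mxE !enum_rankK; case: (G x a b).
Qed.

Definition rlinear (Phi : (T -> 'M[C]_d) -> C) : Prop :=
  (forall G H, Phi (fun x => G x + H x) = Phi G + Phi H) /\
  (forall (r : RR) G, Phi (fun x => Complex r 0 *: G x) = Complex r 0 * Phi G).

Lemma decodeD u v : decode (u + v) = fun x => decode u x + decode v x.
Proof. by apply: funext => x; apply/matrixP => a b; rewrite !mxE. Qed.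

Lemma decodeZ (r : RR) v : decode (r *: v) = fun x => Complex r 0 *: decode v x.
Proof.
apply: funext => x; apply/matrixP => a b; rewrite !mxE.
by apply/eqC_reim; rewrite re_realM im_realM.
Qed.

Lemma rlinear_re_continuous Phi : rlinear Phi -> continuous (fun v => re (Phi (decode v))).
Proof.
case=> PhiD PhiZ; apply: linear_continuous => [u v | r v].
  by rewrite decodeD PhiD reD.
by rewrite decodeZ PhiZ re_realM.
Qed.

Lemma rlinear_im_continuous Phi : rlinear Phi -> continuous (fun v => im (Phi (decode v))).
Proof.
case=> PhiD PhiZ; apply: linear_continuous => [u v | r v].
  by rewrite decodeD PhiD imD.
by rewrite decodeZ PhiZ im_realM.
Qed.

Lemma closed_rlinear_eq Phi c : rlinear Phi -> closed [set v | Phi (decode v) = c].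
Proof.
move=> hPhi; rewrite (_ : [set v | _] =
  [set v | re (Phi (decode v)) = re c] `&` [set v | im (Phi (decode v)) = im c]).
  by apply: closedI; apply: closed_level;
    [exact: rlinear_re_continuous | exact: rlinear_im_continuous].
by apply/seteqP; split=> v /= /eqC_reim.
Qed.

Lemma closed_rlinear_ge0 Phi : rlinear Phi -> closed [set v | 0 <= Phi (decode v)].
Proof.
move=> hPhi; rewrite (_ : [set v | _] =
  [set v | im (Phi (decode v)) = 0] `&` [set v | 0 <= re (Phi (decode v))]).
  apply: closedI; [apply: closed_level | apply: closed_ge0];
    [exact: rlinear_im_continuous | exact: rlinear_re_continuous].
apply/seteqP; split=> v /=; rewrite ge0C; first by case/andP=> /eqP.
by case=> -> ->; rewrite eqxx.
Qed.

Lemma rlinear_herm x a b : rlinear (fun G => G x b a - (G x a b)^*).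
Proof.
split=> [G H | r G]; rewrite !mxE; first by rewrite rmorphD opprD addrACA.
by rewrite rmorphM /= conj_real mulrBr.
Qed.

Lemma rlinear_form x w : rlinear (fun G => mxform w w (G x)).
Proof. by split=> [G H | r G]; rewrite ?mxformD ?mxformZ. Qed.

Lemma rlinear_sum_entry (P : pred T) a b : rlinear (fun G => (\sum_(x | P x) G x) a b).
Proof.
split=> [G H | r G]; first by rewrite big_split mxE.
by rewrite -scaler_sumr mxE.
Qed.

Lemma closed_povm : closed [set v | povm (decode v)].
Proof.
rewrite (_ : [set v | _] =
  [set v | forall x a b, decode v x b a - (decode v x a b)^* = 0] `&`
  [set v | forall x w, 0 <= mxform w w (decode v x)] `&`
  [set v | forall a b, (\sum_x decode v x) a b = (1%:M : 'M[C]_d) a b]).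
  apply: closedI; first apply: closedI.
  - do 3 apply: closed_forall => ?; exact: closed_rlinear_eq (rlinear_herm _ _ _).
  - do 2 apply: closed_forall => ?; exact: closed_rlinear_ge0 (rlinear_form _ _).
  - do 2 apply: closed_forall => ?; exact: closed_rlinear_eq (rlinear_sum_entry _ _ _).
apply/seteqP; split=> v /=.
  case=> psdv sumv; split; last by rewrite sumv.
  by split=> x; have [herm ge] := (psdP _).1 (psdv x) => // a b; rewrite herm subrr.
case=> -[herm ge] sumv; split; last exact/matrixP.
by move=> x; apply/psdP; split=> [a b | w]; [apply/eqP; rewrite -subr_eq0 herm | exact: ge].
Qed.

Lemma compact_povm : compact [set v | povm (decode v)].
Proof.
apply: (subclosed_compact closed_povm
  (@rV_compact _ N (fun=> `[(-1 : RR), 1]%classic) (fun=> @segment_compact _ _ _))).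
move=> v /= hv k; rewrite /= in_itv /=.
case E: (enum_val k) => [[[x a] b] s].
have -> : k = enum_rank ((x, a, b, s) : coord_index) by rewrite -E enum_valK.
have [hre him] := povm_entry_bound x a b hv; clear E.
by case: s; rewrite mxE in hre him.
Qed.

Lemma povm_minimizer (f : (T -> 'M[C]_d) -> RR) :
  continuous (fun v => f (decode v)) -> (exists G : T -> 'M[C]_d, povm G) ->
  exists2 G0 : T -> 'M[C]_d, povm G0 & forall G, povm G -> f G0 <= f G.
Proof.
move=> hf [G hG].
have ne : [set v | povm (decode v)] !=set0 by exists (encode G); rewrite /= encodeK.
have [v0 hv0 v0_min] := EVT_min_rV ne compact_povm (continuous_subspaceT hf).
exists (decode v0); first by rewrite inE in hv0.
move=> G' hG'; rewrite -(encodeK G'); apply: v0_min.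
by rewrite inE /= encodeK.
Qed.

End Encoding.

(** * The joint observable with marginals nearest to A *)

Lemma ler0_of_forall_small (S Q : RR) :
  0 <= Q -> (forall t, 0 < t -> t <= 1 -> 2 * S <= t * Q) -> S <= 0.
Proof.
move=> Q_ge0 small; rewrite leNgt; apply/negP => S_gt0.
have SQ_gt0 : 0 < S + Q by lra.
have t_gt0 : 0 < S / (S + Q) by exact: divr_gt0.
have t_le1 : S / (S + Q) <= 1 by rewrite ler_pdivrMr // mul1r; lra.
have := small _ t_gt0 t_le1.
have : S / (S + Q) * Q <= S by rewrite mulrAC ler_pdivrMr //; nra.
lra.
Qed.

Definition marginal (d n : nat) (m : 'I_n -> nat) (G : outcomes m -> 'M[C]_d)
    (j : 'I_n) (k : 'I_(m j)) : 'M[C]_d :=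
  \sum_(x : outcomes m | x j == k) G x.
Arguments marginal {d n m} G j k.

Section Nearest.
(* Otherwise [j] would be implicit in [A j k] and the like, as the type of [k] fixes it. *)
Local Unset Implicit Arguments.
Context {d n : nat} {m : 'I_n -> nat} (A : forall j : 'I_n, 'I_(m j) -> 'M[C]_d).
Local Notation T := (outcomes m).
Implicit Types G : T -> 'M[C]_d.

Definition marginal_dist G : RR :=
  \sum_(j < n) \sum_(k < m j) redot (A j k - marginal G j k) (A j k - marginal G j k).

Lemma marginal_dist_continuous : continuous (fun v => marginal_dist (decode v)).
Proof.
apply: continuous_sum => j; apply: continuous_sum => k.
apply: continuous_sum => a; apply: continuous_sum => b.
have sub_entry_continuous (pr : C -> RR) : (forall x y, pr (x - y) = pr x - pr y) ->
    continuous (fun v => pr (marginal (decode v) j k a b)) ->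
    continuous (fun v => pr ((A j k - marginal (decode v) j k) a b)).
  move=> prB hpr; rewrite (_ : (fun v => _) = fun v =>
    pr (A j k a b) - pr (marginal (decode v) j k a b)).
    by move=> v; apply: continuousB; [exact: cst_continuous | exact: hpr].
  by apply: funext => v; rewrite !mxE prB.
have reB x y : re (x - y) = re x - re y by rewrite reD reN.
have imB x y : im (x - y) = im x - im y by rewrite imD imN.
have hre := sub_entry_continuous _ reB (rlinear_re_continuous (rlinear_sum_entry _ a b)).
have him := sub_entry_continuous _ imB (rlinear_im_continuous (rlinear_sum_entry _ a b)).
by apply: continuous_add; apply: continuous_mul.
Qed.

Lemma marginal_dist_variational G0 G :
  povm G0 -> (forall G', povm G' -> marginal_dist G0 <= marginal_dist G') -> povm G ->
  \sum_(j < n) \sum_(k < m j)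
    redot (A j k - marginal G0 j k) (marginal G j k - marginal G0 j k) <= 0.
Proof.
move=> povmG0 G0_min povmG.
set S := \sum_(j < n) _.
set Q := \sum_(j < n) \sum_(k < m j) redot (marginal G j k - marginal G0 j k)
                              (marginal G j k - marginal G0 j k).
apply: (@ler0_of_forall_small S Q).
  by apply: sumr_ge0 => j _; apply: sumr_ge0 => k _; exact: redot_ge0.
move=> t t_gt0 t_le1.
pose Gt x := G0 x + Complex t 0 *: (G x - G0 x).
have margGt j k : marginal Gt j k =
    marginal G0 j k + Complex t 0 *: (marginal G j k - marginal G0 j k).
  by rewrite /marginal big_split /= -scaler_sumr sumrB.
have distGt : marginal_dist Gt = marginal_dist G0 - 2 * t * S + t ^+ 2 * Q.
  rewrite /marginal_dist /S /Q !mulr_sumr -sumrB -big_split; apply: eq_bigr => j _.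
  rewrite !mulr_sumr -sumrB -big_split; apply: eq_bigr => k _ /=.
  by rewrite margGt opprD addrA redot_expand.
have := G0_min Gt (povm_segment povmG0 povmG (ltW t_gt0) t_le1).
rewrite distGt => min_le; nra.
Qed.

Lemma marginal_dist_gt0 G : ~ compatible A -> povm G -> 0 < marginal_dist G.
Proof.
move=> incA [psdG sumG].
have row_ge0 j : 0 <= \sum_k redot (A j k - marginal G j k) (A j k - marginal G j k).
  by apply: sumr_ge0 => k _; exact: redot_ge0.
rewrite lt_def sumr_ge0 // andbT; apply/eqP => /(psumr_eq0P (fun j _ => row_ge0 j)) dist0.
apply: incA; exists G; do 2!split=> //; move=> j k.
have /(_ k isT) := psumr_eq0P (fun k _ => redot_ge0 _) (dist0 j isT).
by move/redot_eq0/eqP; rewrite subr_eq0 => /eqP.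
Qed.

Lemma separating_povm : ~ compatible A -> (exists G : T -> 'M[C]_d, povm G) ->
  exists2 G0 : T -> 'M[C]_d, povm G0 &
    forall A', compatible A' ->
      0 < \sum_(j < n) \sum_(k < m j) redot (A j k - marginal G0 j k) (A j k - A' j k).
Proof.
move=> incA povm_ex.
have [G0 povmG0 G0_min] := povm_minimizer marginal_dist_continuous povm_ex.
exists G0 => // A' [G' [psdG' [sumG' margG']]].
have dist_gt0 := marginal_dist_gt0 G0 incA povmG0.
have summandE j k : redot (A j k - marginal G0 j k) (A j k - A' j k) =
    redot (A j k - marginal G0 j k) (A j k - marginal G0 j k) -
    redot (A j k - marginal G0 j k) (marginal G' j k - marginal G0 j k).
  by rewrite -redotBr /marginal margG' opprB addrA subrK.
under eq_bigr => j _ do under eq_bigr => k _ do rewrite summandE.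
under eq_bigr do rewrite sumrB.
have := marginal_dist_variational G0 G' povmG0 G0_min (conj psdG' sumG').
by rewrite sumrB; rewrite /marginal_dist in dist_gt0; lra.
Qed.

End Nearest.

Lemma marginal_observable d n (m : 'I_n -> nat) (G : outcomes m -> 'M[C]_d) j :
  povm G -> observable (marginal G j).
Proof.
case=> psdG sumG; split=> [k | ]; first by apply: psd_sum => x _; exact: psdG.
by rewrite -sumG (partition_big (fun x : outcomes m => x j) predT).
Qed.

Lemma observable_size_gt0 d m (E : 'I_m -> 'M[C]_d) : (0 < d)%N -> observable E -> (0 < m)%N.
Proof.
move=> d_gt0 [_]; case: m E => // E; rewrite big_ord0 => /matrixP.
move=> /(_ (Ordinal d_gt0) (Ordinal d_gt0)) /eqP.
by rewrite !mxE eqxx eq_sym oner_eq0.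
Qed.

Lemma incompatible_dim_gt0 d n (m : 'I_n -> nat) (A : forall j : 'I_n, 'I_(m j) -> 'M[C]_d) :
  ~ compatible A -> (0 < d)%N.
Proof.
case: d A => // A incA; exfalso; apply: incA.
exists (fun _ => 1%:M); split; first by move=> x; exact: psd1.
by split=> [|j k]; apply/matrixP => -[].
Qed.

(** * Probe states *)

Section Probes.
Local Unset Implicit Arguments.
Context {d n : nat} {m : 'I_n -> nat} (A B : forall j : 'I_n, 'I_(m j) -> 'M[C]_d).
Variable k0 : forall j : 'I_n, 'I_(m j).
Hypotheses (obsA : forall j, observable (A j)) (obsB : forall j, observable (B j)).
Hypothesis d_gt0 : (0 < d)%N.

(* [3] is large enough to make this positive definite, see [probe_operatorE]. *)
Definition probe_operator j k : 'M[C]_d :=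
  3%:M + (A j k - B j k) - (A j (k0 j) - B j (k0 j)).

Definition probe_state j k : 'M[C]_d := (\tr (probe_operator j k))^-1 *: probe_operator j k.

Definition maximally_mixed : 'M[C]_d := (d%:R)^-1 *: 1%:M.

Definition probes (rho : 'M[C]_d) : Prop :=
  rho = maximally_mixed \/ exists j k, k != k0 j /\ rho = probe_state j k.

Lemma probe_operatorE j k : probe_operator j k =
  1%:M + ((1%:M - B j k) + (1%:M - A j (k0 j)) + A j k + B j (k0 j)).
Proof. by apply/matrixP => a b; rewrite /probe_operator !mxE; ring. Qed.

Lemma probe_operator_psd j k : psd (probe_operator j k - 1%:M).
Proof.
rewrite probe_operatorE addrC addKr.
apply: psdD; [apply: psdD; [apply: psdD |] |].
- exact: povm_compl_psd (obsB j).
- exact: povm_compl_psd (obsA j).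
- exact: (obsA j).1.
- exact: (obsB j).1.
Qed.

Lemma probe_trace_gt0 j k : 0 < \tr (probe_operator j k).
Proof.
rewrite -(subrK 1%:M (probe_operator j k)) mxtraceD mxtrace1.
by apply: ltr_wpDl; [exact: mxtrace_psd_ge0 (probe_operator_psd j k) | rewrite ltr0n].
Qed.

Lemma probes_density rho : probes rho -> density rho.
Proof.
have dC_neq0 : (d%:R : C) != 0 by rewrite pnatr_eq0 -lt0n.
have tr_neq0 j k : \tr (probe_operator j k) != 0 by rewrite gt_eqF ?probe_trace_gt0.
case=> [-> | [j [k [_ ->]]]]; split; rewrite ?mxtraceZ ?mxtrace1 ?mulVf //.
  by apply: psdZ; [rewrite invr_ge0 ler0n | exact: psd1].
apply: psdZ; first by rewrite invr_ge0 ltW ?probe_trace_gt0.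
by have := psdD (probe_operator_psd j k) (@psd1 d); rewrite subrK.
Qed.

Section Agreement.
Variable A' : forall j : 'I_n, 'I_(m j) -> 'M[C]_d.
Hypothesis obsA' : forall j, observable (A' j).
Hypothesis agree : forall j x rho, probes rho -> \tr (rho *m A' j x) = \tr (rho *m A j x).

Lemma agree_trace j k : \tr (A' j k) = \tr (A j k).
Proof.
have := agree j k _ (or_introl erefl); rewrite -!scalemxAl !mul1mx !mxtraceZ.
by apply: mulfI; rewrite invr_eq0 pnatr_eq0 -lt0n.
Qed.

(* [1%:M] and [probe_operator j k] are multiples of probe states, against which [A'] and
   [A] agree. *)
Lemma agree_shifted_witness j k :
  \tr ((A j k - B j k) *m (A j k - A' j k)) =
  \tr ((A j (k0 j) - B j (k0 j)) *m (A j k - A' j k)).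
Proof.
have [-> // | k_neq] := eqVneq k (k0 j).
have agree_probe : \tr (probe_operator j k *m A' j k) = \tr (probe_operator j k *m A j k).
  have := agree j k _ (or_intror (ex_intro _ j (ex_intro _ k (conj k_neq erefl)))).
  rewrite -!scalemxAl !mxtraceZ; apply: mulfI.
  by rewrite invr_eq0 gt_eqF ?probe_trace_gt0.
have trX : \tr (A j k - A' j k) = 0 by rewrite linearB /= agree_trace subrr.
have trPX : \tr (probe_operator j k *m (A j k - A' j k)) = 0.
  by rewrite mulmxBr linearB /= agree_probe subrr.
apply/eqP; rewrite -subr_eq0 -linearB /= -mulmxBl.
have -> : A j k - B j k - (A j (k0 j) - B j (k0 j)) = probe_operator j k - 3%:M.
  by apply/matrixP => a b; rewrite /probe_operator !mxE; ring.
by rewrite mulmxBl mul_scalar_mx linearB /= mxtraceZ trX trPX mulr0 subrr.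
Qed.

Lemma agree_sum_trace :
  \sum_(j < n) \sum_(k < m j) \tr ((A j k - B j k) *m (A j k - A' j k)) = 0.
Proof.
apply: big1 => j _; under eq_bigr do rewrite agree_shifted_witness.
rewrite -raddf_sum -mulmx_sumr sumrB (obsA j).2 (obsA' j).2 subrr.
by rewrite mulmx0 raddf0.
Qed.

End Agreement.

Lemma probes_incompatible :
  (forall A', compatible A' ->
     0 < \sum_(j < n) \sum_(k < m j) redot (A j k - B j k) (A j k - A' j k)) ->
  ~ S0_compatible probes A.
Proof.
move=> sep [A' [obsA' [compA' agree]]].
have := sep A' compA'.
rewrite (eq_bigr (fun j => re (\sum_(k < m j) \tr ((A j k - B j k) *m (A j k - A' j k))))).
  by rewrite -re_sum (agree_sum_trace A' obsA' agree) ltxx.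
move=> j _; rewrite re_sum; apply: eq_bigr => k _.
by rewrite redot_trace adj_mxB ((obsA j).1 k).1 ((obsB j).1 k).1.
Qed.

Definition probe_span : 'M[C]_(d * d) :=
  (\sum_(j < n) \sum_(k < m j | k != k0 j) <<mxvec (probe_state j k - maximally_mixed)>>)%MS.

Lemma affdim_probes : affdim probes (\rank probe_span).
Proof.
exists maximally_mixed; split; first by left.
exists probe_span; split=> //; split.
  move=> v [rho [[-> | [j [k [k_neq ->]]]] ->]]; first by rewrite subrr linear0 sub0mx.
  by apply: (sumsmx_sup j) => //; apply: (sumsmx_sup k) => //; rewrite genmxE.
move=> U sub_U; apply/sumsmx_subP => j _; apply/sumsmx_subP => k k_neq.
by rewrite genmxE; apply: sub_U; exists (probe_state j k); split=> //; right; exists j, k.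
Qed.

Lemma rank_probe_span : (\rank probe_span <= \sum_(j < n) (m j).-1)%N.
Proof.
apply: leq_trans (mxrank_sum_leqif _).1 _; apply: leq_sum => j _.
apply: (@leq_trans (\sum_(k < m j | k != k0 j) 1)%N).
  by apply: leq_sum => k _; rewrite /= genmxE rank_leq_row.
rewrite (eq_bigl (mem (predC1 (k0 j)))) => [|k]; last by rewrite inE.
by rewrite sum1_card cardC1 card_ord.
Qed.

Lemma chi_candidate_probes :
  (forall A', compatible A' ->
     0 < \sum_(j < n) \sum_(k < m j) redot (A j k - B j k) (A j k - A' j k)) ->
  chi_candidate A (\rank probe_span).+1.
Proof.
move=> sep; exists probes, (\rank probe_span).
split; first exact: probes_density.
by split; [exact: probes_incompatible | split; first exact: affdim_probes].
Qed.

End Probes.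

Lemma is_chi_incomp_le d n (m : 'I_n -> nat) (A : forall j : 'I_n, 'I_(m j) -> 'M[C]_d) c0 :
  chi_candidate A c0 -> exists2 c, is_chi_incomp A c & (c <= c0)%N.
Proof.
move=> cand_c0; have cand_ex : exists c, `[< chi_candidate A c >] by exists c0; exact/asboolP.
have [c /asboolP cand_c c_min] := ex_minnP cand_ex.
by exists c; [split=> // c' /asboolP/c_min | exact/c_min/asboolP].
Qed.

Theorem proposition4p5 (d n : nat) (m : 'I_n -> nat)
    (A : forall j : 'I_n, 'I_(m j) -> 'M[C]_d) :
  (forall j, observable (A j)) -> ~ compatible A ->
  exists c : nat, is_chi_incomp A c /\ leq (c + n) ((\sum_(j < n) m j) + 1)%N.
Proof.
move=> obsA incA.
have d_gt0 := incompatible_dim_gt0 incA.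
have m_gt0 j : (0 < m j)%N := observable_size_gt0 d_gt0 (obsA j).
pose k0 j : 'I_(m j) := Ordinal (m_gt0 j).
have [G0 povmG0 sepG0] :=
  separating_povm A incA (ex_intro _ _ (povm_point d (finfun k0 : outcomes m))).
have obsB j := marginal_observable j povmG0.
have [c chi_c c_le] :=
  is_chi_incomp_le (chi_candidate_probes A (marginal G0) k0 obsA obsB d_gt0 sepG0).
exists c; split=> //.
have sum_predn : (\sum_(j < n) (m j).-1 + n = \sum_(j < n) m j)%N.
  rewrite -[X in (_ + X)%N]card_ord -sum1_card -big_split /=.
  by apply: eq_bigr => j _; rewrite addn1 prednK.
have := rank_probe_span A (marginal G0) k0; rewrite -sum_predn; lia.
Qed.
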